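(* Consider the following three-dimensional unital algebras over $\mathbb{F}_2$, each with basis $1,x,y$: A: $x^2=y^2=xy=yx=0$; B: $x^2=x$, $y^2=y$, $xy=yx=0$; C: $x^2=x$, $y^2=xy=yx=0$; D: $x^2=y$, $y^2=x$, $xy=yx=x+y$; E: $x^2=y$, $y^2=xy=yx=0$; F: $y^2=x$, $xy=yx=1+x$, $x^2=1+x+y$; G (noncommutative): $x^2=x$, $y^2=0$, $xy=y$, $yx=0$. Then: (i) the algebras A, D and E admit no one-dimensional left-parallelisable first order differential calculus; (ii) for none of the algebras A–G does any one-dimensional left-parallelisable first order differential calculus admit a quantum metric that is central and invertible.
   Context: A one-dimensional left-parallelisable first order differential calculus on $A$ is an $A$-bimodule $\Omega^1$ which is free of rank one as a left $A$-module, on a basis $\omega$, together with a linear map $\mathrm{d}:A\to\Omega^1$ satisfying the Leibniz rule $\mathrm{d}(ab)=(\mathrm{d}a)b+a\,\mathrm{d}b$, such that $\Omega^1$ is spanned by elements $a\,\mathrm{d}b$ ($a,b\in A$). An element $g\in\Omega^1\otimes_A\Omega^1$ is central if $ag=ga$ for all $a\in A$, and invertible if there is a bimodule map $(\ ,\ ):\Omega^1\otimes_A\Omega^1\to A$ with $((\eta,\ )\otimes\mathrm{id})g=\eta=(\mathrm{id}\otimes(\ ,\eta))g$ for all $\eta\in\Omega^1$. *)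

From HB Require Import structures.
From mathcomp Require Import all_boot all_order all_algebra.
Set Implicit Arguments. Unset Strict Implicit. Unset Printing Implicit Defensive.
Import GRing.Theory.
Local Open Scope ring_scope.

(* The seven 3-dimensional unital F_2-algebras, on the common carrier  *)
(* F_2^3; an element (a, b, c) stands for a*1 + b*x + c*y.             *)

Definition alg : Type := ('F_2 * 'F_2 * 'F_2)%type.

Definition mk3 (a b c : 'F_2) : alg := (a, b, c).
Definition e1 : alg := mk3 1 0 0.
Definition ex : alg := mk3 0 1 0.
Definition ey : alg := mk3 0 0 1.
Definition z3 : alg := mk3 0 0 0.

Definition sc3 (k : 'F_2) (u : alg) : alg :=
  let: (a, b, c) := u in mk3 (k * a) (k * b) (k * c).

Inductive algname := AlgA | AlgB | AlgC | AlgD | AlgE | AlgF | AlgG.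

Definition xx (n : algname) : alg :=
  match n with
  | AlgA => z3 | AlgB => ex | AlgC => ex | AlgD => ey | AlgE => ey
  | AlgF => mk3 1 1 1 | AlgG => ex end.
Definition xy (n : algname) : alg :=
  match n with
  | AlgA => z3 | AlgB => z3 | AlgC => z3 | AlgD => mk3 0 1 1 | AlgE => z3
  | AlgF => mk3 1 1 0 | AlgG => ey end.
Definition yx (n : algname) : alg :=
  match n with
  | AlgA => z3 | AlgB => z3 | AlgC => z3 | AlgD => mk3 0 1 1 | AlgE => z3
  | AlgF => mk3 1 1 0 | AlgG => z3 end.
Definition yy (n : algname) : alg :=
  match n with
  | AlgA => z3 | AlgB => ey | AlgC => z3 | AlgD => ex | AlgE => z3
  | AlgF => ex | AlgG => z3 end.

Definition amul (n : algname) (u v : alg) : alg :=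
  let: (a, b, c) := u in let: (a', b', c') := v in
  sc3 (a * a') e1 + sc3 (a * b' + b * a') ex + sc3 (a * c' + c * a') ey
  + sc3 (b * b') (xx n) + sc3 (b * c') (xy n)
  + sc3 (c * b') (yx n) + sc3 (c * c') (yy n).

Section Calculus.
Variables (n : algname) (M : zmodType).
Variables (lact : alg -> M -> M) (ract : M -> alg -> M).

Definition is_bimodule : Prop :=
  (forall a b m, lact (a + b) m = lact a m + lact b m) /\
  (forall a m m', lact a (m + m') = lact a m + lact a m') /\
  (forall m, lact e1 m = m) /\
  (forall a b m, lact (amul n a b) m = lact a (lact b m)) /\
  (forall a b m, ract m (a + b) = ract m a + ract m b) /\
  (forall a m m', ract (m + m') a = ract m a + ract m' a) /\
  (forall m, ract m e1 = m) /\
  (forall a b m, ract m (amul n a b) = ract (ract m a) b) /\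
  (forall a b m, ract (lact a m) b = lact a (ract m b)).

Definition left_free_basis (w : M) : Prop :=
  forall m : M, exists! a : alg, m = lact a w.

(* one-dimensional left-parallelisable first order differential calculus;
   d is F_2-linear, i.e. additive *)
Definition is_lp_fodc (d : alg -> M) (w : M) : Prop :=
  [/\ is_bimodule, left_free_basis w,
      (forall a b, d (a + b) = d a + d b),
      (forall a b, d (amul n a b) = ract (d a) b + lact a (d b)) &
      (forall m : M, exists s : seq (alg * alg),
          m = \sum_(p <- s) lact p.1 (d p.2))].

(* Elements of Omega^1 (x)_A Omega^1 are represented by finite formal sums
   sum_i eta_i (x) xi_i, i.e. by s : seq (M * M).  Two such sums are equal
   in the tensor product iff they agree under every A-balanced biadditive
   map into any abelian group (universal property of (x)_A). *)
Definition balanced (G : zmodType) (beta : M -> M -> G) : Prop :=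
  [/\ (forall m m' k, beta (m + m') k = beta m k + beta m' k),
      (forall m k k', beta m (k + k') = beta m k + beta m k') &
      (forall m a k, beta (ract m a) k = beta m (lact a k))].

Definition teq (s t : seq (M * M)) : Prop :=
  forall (G : zmodType) (beta : M -> M -> G), balanced beta ->
    \sum_(p <- s) beta p.1 p.2 = \sum_(p <- t) beta p.1 p.2.

Definition central (g : seq (M * M)) : Prop :=
  forall a : alg,
    teq [seq (lact a p.1, p.2) | p <- g] [seq (p.1, ract p.2 a) | p <- g].

(* a bimodule map ( , ) : Omega^1 (x)_A Omega^1 -> A, given (via the
   universal property) by an A-balanced biadditive map compatible with
   the outer left and right actions *)
Definition bimod_pairing (beta : M -> M -> alg) : Prop :=
  [/\ balanced beta,
      (forall a m k, beta (lact a m) k = amul n a (beta m k)) &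
      (forall a m k, beta m (ract k a) = amul n (beta m k) a)].

Definition invertible (g : seq (M * M)) : Prop :=
  exists beta : M -> M -> alg, bimod_pairing beta /\
    (forall eta : M, \sum_(p <- g) lact (beta eta p.1) p.2 = eta) /\
    (forall eta : M, \sum_(p <- g) ract p.1 (beta p.2 eta) = eta).

End Calculus.

From mathcomp Require Import all_boot all_order all_algebra.
Set Implicit Arguments. Unset Strict Implicit. Unset Printing Implicit Defensive.
Import GRing.Theory.
Local Open Scope ring_scope.

(* A one-dimensional left-parallelisable calculus with basis w is encoded inside A
   by coordinates: w c = sigma(c) w for a unital algebra endomorphism sigma of A,
   and d a = delta(a) w for a sigma-derivation delta, i.e.
   delta(a b) = delta(a) sigma(b) + a delta(b); spanning says that 1 lies in the
   left ideal generated by delta(x) and delta(y).  A central element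
   g = sum eta_i (x) xi_i gives G = sum coord(eta_i) sigma(coord(xi_i)) with
   c G = G sigma^2(c) for all c, and an inverse pairing ( , ) gives G sigma(P) = 1
   for P = (w, w).  Over F_2 the maps sigma and delta are determined by their
   values at x and y, so both claims come down to a finite search over these
   values and over G and P, which has no solutions. *)

Lemma F2_cases (k : 'F_2) : k = 0 \/ k = 1.
Proof. by case: k => [[|[|//]] lt_k2]; [left | right]; apply/val_inj. Qed.

Definition bool_of_F2 (k : 'F_2) : bool := val k == 1%N.

Lemma bool_of_F2D a b : bool_of_F2 (a + b) = bool_of_F2 a (+) bool_of_F2 b.
Proof. by case: (F2_cases a) => ->; case: (F2_cases b) => ->; vm_compute. Qed.

Lemma bool_of_F2M a b : bool_of_F2 (a * b) = bool_of_F2 a && bool_of_F2 b.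
Proof. by case: (F2_cases a) => ->; case: (F2_cases b) => ->; vm_compute. Qed.

Lemma bool_of_F2_inj : injective bool_of_F2.
Proof. by move=> a b; case: (F2_cases a) => ->; case: (F2_cases b) => ->. Qed.

(* A copy of the algebras with (a, b, c) standing for a + b x + c y and F_2
   replaced by (xor, and) on bool: the exhaustive searches below are evaluated
   on this copy, because every operation of 'F_2 recomputes its modulus. *)
Definition bits : Type := (bool * bool * bool)%type.

Definition all_bits : seq bits :=
  [seq (p, c) | p <- [seq (a, b) | a <- [:: false; true], b <- [:: false; true]],
                c <- [:: false; true]].

Lemma mem_all_bits u : u \in all_bits.
Proof. by case: u => [[[] []] []]. Qed.

Lemma all_bitsE (P : pred bits) : all P all_bits -> forall u, P u.
Proof. by move/allP => allP u; apply/allP/mem_all_bits. Qed.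

Lemma all_bits3E (P : bits -> bits -> bits -> bool) u v x :
  all (fun u => all (fun v => all (P u v) all_bits) all_bits) all_bits -> P u v x.
Proof. by move=> /all_bitsE/(_ u)/all_bitsE/(_ v)/all_bitsE. Qed.

Definition badd (u v : bits) : bits :=
  let: (a, b, c) := u in let: (a', b', c') := v in (a (+) a', b (+) b', c (+) c').
Definition bscale (k : bool) (u : bits) : bits :=
  let: (a, b, c) := u in (k && a, k && b, k && c).
Definition blin (v1 vx vy u : bits) : bits :=
  let: (a, b, c) := u in badd (badd (bscale a v1) (bscale b vx)) (bscale c vy).

Definition bits_of (u : alg) : bits :=
  let: (a, b, c) := u in (bool_of_F2 a, bool_of_F2 b, bool_of_F2 c).
Definition alg_of (u : bits) : alg :=
  let: (a, b, c) := u in mk3 a%:R b%:R c%:R.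

Lemma alg_ofK u : bits_of (alg_of u) = u.
Proof. by case: u => [[[] []] []]; vm_compute. Qed.

Lemma bits_of_inj : injective bits_of.
Proof.
by move=> [[a b] c] [[a' b'] c'] [/bool_of_F2_inj -> /bool_of_F2_inj -> /bool_of_F2_inj ->].
Qed.

Lemma bits_ofD u v : bits_of (u + v) = badd (bits_of u) (bits_of v).
Proof. by case: u => [[a b] c]; case: v => [[a' b'] c'] /=; rewrite !bool_of_F2D. Qed.

Lemma bits_of_sc3 k u : bits_of (sc3 k u) = bscale (bool_of_F2 k) (bits_of u).
Proof. by case: u => [[a b] c] /=; rewrite !bool_of_F2M. Qed.

Definition b_0 : bits := (false, false, false).
Definition b_1 : bits := (true, false, false).
Definition b_x : bits := (false, true, false).
Definition b_y : bits := (false, false, true).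

Lemma bits_of0 : bits_of 0 = b_0. Proof. by vm_compute. Qed.
Lemma bits_of_e1 : bits_of e1 = b_1. Proof. by vm_compute. Qed.

Definition bits_table (n : algname) : bits * bits * bits * bits :=
  match n with
  | AlgA => (b_0, b_0, b_0, b_0)
  | AlgB => (b_x, b_0, b_0, b_y)
  | AlgC => (b_x, b_0, b_0, b_0)
  | AlgD => (b_y, (false, true, true), (false, true, true), b_x)
  | AlgE => (b_y, b_0, b_0, b_0)
  | AlgF => ((true, true, true), (true, true, false), (true, true, false), b_x)
  | AlgG => (b_x, b_y, b_0, b_0)
  end.

Definition bmul (n : algname) (u v : bits) : bits :=
  let: (bxx, bxy, byx, byy) := bits_table n in
  let: (a, b, c) := u in let: (a', b', c') := v in
  badd (badd (badd (badd (badd (badd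
    (bscale (a && a') b_1)
    (bscale ((a && b') (+) (b && a')) b_x))
    (bscale ((a && c') (+) (c && a')) b_y))
    (bscale (b && b') bxx))
    (bscale (b && c') bxy))
    (bscale (c && b') byx))
    (bscale (c && c') byy).

Lemma bits_of_amul n u v : bits_of (amul n u v) = bmul n (bits_of u) (bits_of v).
Proof.
case: u => [[a b] c]; case: v => [[a' b'] c'].
rewrite /amul !bits_ofD !bits_of_sc3 !bool_of_F2D !bool_of_F2M.
by case: n; vm_compute.
Qed.

Lemma sc30 u : sc3 0 u = 0.
Proof. by apply: bits_of_inj; rewrite bits_of_sc3; case: u => [[a b] c]; vm_compute. Qed.

Lemma sc31 u : sc3 1 u = u.
Proof.
by apply: bits_of_inj; rewrite bits_of_sc3; case: (bits_of u) => [[a b] c]; vm_compute.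
Qed.

Lemma sc3r0 k : sc3 k 0 = 0.
Proof. by case: (F2_cases k) => ->; rewrite ?sc30 ?sc31. Qed.

Lemma alg_decomp u : u = sc3 u.1.1 e1 + sc3 u.1.2 ex + sc3 u.2 ey.
Proof.
apply: bits_of_inj; rewrite !bits_ofD !bits_of_sc3; case: u => [[a b] c] /=.
by case: (bool_of_F2 a); case: (bool_of_F2 b); case: (bool_of_F2 c); vm_compute.
Qed.

Section AdditiveMaps.
Variables (f : alg -> alg) (fD : {morph f : u v / u + v}).

Lemma additive_sc3 k u : f (sc3 k u) = sc3 k (f u).
Proof.
have f0 : f 0 = 0 by apply: (addrI (f 0)); rewrite -fD !addr0.
by case: (F2_cases k) => ->; rewrite ?sc30 ?sc31.
Qed.

Lemma additive_decomp u : f u = sc3 u.1.1 (f e1) + sc3 u.1.2 (f ex) + sc3 u.2 (f ey).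
Proof. by rewrite {1}(alg_decomp u) !fD !additive_sc3. Qed.

Lemma bits_of_additive u :
  bits_of (f u) = blin (bits_of (f e1)) (bits_of (f ex)) (bits_of (f ey)) (bits_of u).
Proof. by rewrite additive_decomp !bits_ofD !bits_of_sc3; case: u => [[a b] c]. Qed.

End AdditiveMaps.

Section AlgebraLaws.
Variable n : algname.
Local Notation "a ** b" := (amul n a b) (at level 40).

Lemma amulA : associative (amul n).
Proof.
have bmulA : all (fun u => all (fun v => all (fun x =>
    bmul n u (bmul n v x) == bmul n (bmul n u v) x) all_bits) all_bits) all_bits.
  by case: n; vm_compute.
move=> u v x; apply: bits_of_inj; rewrite !bits_of_amul; apply/eqP.
exact: all_bits3E bmulA.
Qed.

Lemma amulDl : left_distributive (amul n) +%R.
Proof.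
have bmulDl : all (fun u => all (fun v => all (fun x =>
    bmul n (badd u v) x == badd (bmul n u x) (bmul n v x)) all_bits) all_bits) all_bits.
  by case: n; vm_compute.
move=> u v x; apply: bits_of_inj; rewrite !(bits_of_amul, bits_ofD); apply/eqP.
exact: all_bits3E bmulDl.
Qed.

Lemma amulDr : right_distributive (amul n) +%R.
Proof.
have bmulDr : all (fun u => all (fun v => all (fun x =>
    bmul n x (badd u v) == badd (bmul n x u) (bmul n x v)) all_bits) all_bits) all_bits.
  by case: n; vm_compute.
move=> x u v; apply: bits_of_inj; rewrite !(bits_of_amul, bits_ofD); apply/eqP.
exact: all_bits3E bmulDr.
Qed.

Lemma amul1l : left_id e1 (amul n).
Proof.
have bmul1l : all (fun u => bmul n b_1 u == u) all_bits by case: n; vm_compute.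
move=> u; apply: bits_of_inj; rewrite bits_of_amul bits_of_e1.
exact/eqP/(all_bitsE bmul1l).
Qed.

Lemma amul1r : right_id e1 (amul n).
Proof.
have bmul1r : all (fun u => bmul n u b_1 == u) all_bits by case: n; vm_compute.
move=> u; apply: bits_of_inj; rewrite bits_of_amul bits_of_e1.
exact/eqP/(all_bitsE bmul1r).
Qed.

Lemma amul0l : left_zero 0 (amul n).
Proof. by move=> u; apply: (addrI (0 ** u)); rewrite -amulDl !addr0. Qed.

Lemma amul0r : right_zero 0 (amul n).
Proof. by move=> u; apply: (addrI (u ** 0)); rewrite -amulDr !addr0. Qed.

Lemma amul_sc3 k u v : u ** sc3 k v = sc3 k u ** v.
Proof. by case: (F2_cases k) => ->; rewrite ?sc30 ?sc31 ?amul0l ?amul0r. Qed.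

Lemma amul_sumr I (r : seq I) (F : I -> alg) a :
  a ** (\sum_(i <- r) F i) = \sum_(i <- r) a ** F i.
Proof. exact: (big_endo (amul n a) (amulDr a) (amul0r a)). Qed.

Lemma amul_suml I (r : seq I) (F : I -> alg) a :
  (\sum_(i <- r) F i) ** a = \sum_(i <- r) F i ** a.
Proof. exact: (big_endo (amul n ^~ a) (fun u v => amulDl u v a) (amul0l a)). Qed.

End AlgebraLaws.

(* The calculus data (sigma, delta) given by sx = sigma(x), sy = sigma(y),
   dx = delta(x), dy = delta(y).  The multiplicativity and Leibniz rules are only
   imposed on products of generators, which is all that the search needs. *)
Definition endo_bits (n : algname) (sx sy : bits) : bool :=
  let sigma := blin b_1 sx sy in
  all (fun u => all (fun v =>
    sigma (bmul n u v) == bmul n (sigma u) (sigma v)) [:: b_x; b_y]) [:: b_x; b_y].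

Definition fodc_bits (n : algname) (sx sy dx dy : bits) : bool :=
  let sigma := blin b_1 sx sy in
  let delta := blin b_0 dx dy in
  [&& endo_bits n sx sy,
      all (fun u => all (fun v =>
        delta (bmul n u v) == badd (bmul n (delta u) (sigma v)) (bmul n u (delta v)))
        [:: b_x; b_y]) [:: b_x; b_y]
    & has (fun a => has (fun b =>
        badd (bmul n a dx) (bmul n b dy) == b_1) all_bits) all_bits].

Definition metric_bits (n : algname) (sx sy G P : bits) : bool :=
  let sigma := blin b_1 sx sy in
  all (fun c => bmul n c G == bmul n G (sigma (sigma c))) all_bits
  && (bmul n G (sigma P) == b_1).

Lemma no_fodc_bits_ADE n sx sy dx dy :
  n = AlgA \/ n = AlgD \/ n = AlgE -> ~~ fodc_bits n sx sy dx dy.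
Proof.
(* Nested [if]s rather than [&&]/[==>], whose arguments vm_compute evaluates
   eagerly: the search only continues below an admissible sigma. *)
move=> nADE; have search : all (fun sx => all (fun sy =>
    if endo_bits n sx sy then
      all (fun dx => all (fun dy => ~~ fodc_bits n sx sy dx dy) all_bits) all_bits
    else true) all_bits) all_bits.
  by case: nADE => [|[|]] ->; vm_compute.
apply/negP => /[dup] /and3P[endo _ _]; apply/negP.
move: search => /all_bitsE/(_ sx)/all_bitsE/(_ sy).
by rewrite endo => /all_bitsE/(_ dx)/all_bitsE/(_ dy).
Qed.

Lemma fodc_bits_no_metric n sx sy dx dy G P :
  fodc_bits n sx sy dx dy -> ~~ metric_bits n sx sy G P.
Proof.
have search : all (fun sx => all (fun sy =>
    if endo_bits n sx sy then all (fun dx => all (fun dy =>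
      if fodc_bits n sx sy dx dy then
        all (fun G => all (fun P => ~~ metric_bits n sx sy G P) all_bits) all_bits
      else true) all_bits) all_bits
    else true) all_bits) all_bits.
  by case: n; vm_compute.
move=> /[dup] /and3P[endo _ _] fodc.
move: search => /all_bitsE/(_ sx)/all_bitsE/(_ sy).
rewrite endo => /all_bitsE/(_ dx)/all_bitsE/(_ dy).
by rewrite fodc => /all_bitsE/(_ G)/all_bitsE/(_ P).
Qed.

Section LeftParallelisableCalculus.
Variables (n : algname) (M : zmodType) (lact : alg -> M -> M) (ract : M -> alg -> M).
Variables (d : alg -> M) (w : M).
Hypothesis fodc : is_lp_fodc n lact ract d w.
Local Notation "a ** b" := (amul n a b) (at level 40).

Let bimodule : is_bimodule n lact ract. Proof. by case: fodc. Qed.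
Let free_basis : left_free_basis lact w. Proof. by case: fodc. Qed.
Let dD : {morph d : a b / a + b}. Proof. by case: fodc. Qed.
Let dM a b : d (a ** b) = ract (d a) b + lact a (d b). Proof. by case: fodc. Qed.
Let d_span m : exists s : seq (alg * alg), m = \sum_(p <- s) lact p.1 (d p.2).
Proof. by case: fodc. Qed.
Let lactDl a b m : lact (a + b) m = lact a m + lact b m. Proof. by case: bimodule. Qed.
Let lact1 m : lact e1 m = m. Proof. by case: bimodule => _ [_ []]. Qed.
Let lactM a b m : lact (a ** b) m = lact a (lact b m).
Proof. by case: bimodule => _ [_ [_ []]]. Qed.
Let ractDr a b m : ract m (a + b) = ract m a + ract m b.
Proof. by case: bimodule => _ [_ [_ [_ []]]]. Qed.
Let ract1 m : ract m e1 = m. Proof. by case: bimodule => _ [_ [_ [_ [_ [_ []]]]]]. Qed.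
Let ractM a b m : ract m (a ** b) = ract (ract m a) b.
Proof. by case: bimodule => _ [_ [_ [_ [_ [_ [_ []]]]]]]. Qed.
Let lact_ract a b m : ract (lact a m) b = lact a (ract m b).
Proof. by case: bimodule => _ [_ [_ [_ [_ [_ [_ [_ ]]]]]]]. Qed.

Definition coord (m : M) : alg := odflt 0 [pick a : alg | lact a w == m].

Lemma coordK m : lact (coord m) w = m.
Proof.
rewrite /coord; case: pickP => [a /eqP // | no_coord].
by case: (free_basis m) => a [def_m _]; move: (no_coord a); rewrite def_m eqxx.
Qed.

Lemma coord_eq a m : lact a w = m -> coord m = a.
Proof.
case: (free_basis m) => b [_ uniq_b] def_m.
by rewrite -(uniq_b a (esym def_m)) -(uniq_b _ (esym (coordK m))).
Qed.

Lemma coordD : {morph coord : m m' / m + m'}.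
Proof. by move=> m m'; apply: coord_eq; rewrite lactDl !coordK. Qed.

Lemma coord0 : coord 0 = 0.
Proof. by apply: (addrI (coord 0)); rewrite -coordD !addr0. Qed.

Lemma coord_lact a m : coord (lact a m) = a ** coord m.
Proof. by apply: coord_eq; rewrite lactM coordK. Qed.

Lemma coord_basis : coord w = e1.
Proof. by apply: coord_eq; rewrite lact1. Qed.

Definition sigma (c : alg) : alg := coord (ract w c).

Lemma coord_ract m c : coord (ract m c) = coord m ** sigma c.
Proof. by apply: coord_eq; rewrite lactM coordK -lact_ract coordK. Qed.

Lemma sigmaD : {morph sigma : a b / a + b}.
Proof. by move=> a b; rewrite /sigma ractDr coordD. Qed.

Lemma sigma1 : sigma e1 = e1.
Proof. by rewrite /sigma ract1 coord_basis. Qed.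

Lemma sigmaM a b : sigma (a ** b) = sigma a ** sigma b.
Proof. by rewrite /sigma ractM coord_ract. Qed.

Definition delta (a : alg) : alg := coord (d a).

Lemma deltaD : {morph delta : a b / a + b}.
Proof. by move=> a b; rewrite /delta dD coordD. Qed.

Lemma deltaM a b : delta (a ** b) = delta a ** sigma b + a ** delta b.
Proof. by rewrite /delta dM coordD coord_ract coord_lact. Qed.

Lemma delta1 : delta e1 = 0.
Proof.
apply: (addrI (delta e1)).
by rewrite addr0 -{3}(amul1l n e1) deltaM sigma1 amul1r amul1l.
Qed.

Lemma delta_generates : exists a b, a ** delta ex + b ** delta ey = e1.
Proof.
have [s def_w] := d_span w.
rewrite -coord_basis def_w (big_morph coord coordD coord0).
elim/big_rec: _ => [|p _ _ [a [b <-]]]; first by exists 0, 0; rewrite !amul0l addr0.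
exists (sc3 p.2.1.2 p.1 + a), (sc3 p.2.2 p.1 + b).
rewrite coord_lact -/(delta p.2) (additive_decomp deltaD p.2) delta1 sc3r0 add0r.
by rewrite amulDr !amul_sc3 !amulDl addrACA.
Qed.

Definition metric_coord (g : seq (M * M)) : alg :=
  \sum_(p <- g) coord p.1 ** sigma (coord p.2).

Lemma central_metric_coord g :
  central lact ract g -> forall c, c ** metric_coord g = metric_coord g ** sigma (sigma c).
Proof.
move=> g_central c; pose beta m k := coord m ** sigma (coord k).
have beta_balanced : balanced lact ract beta.
  split=> [m m' k | m k k' | m a k]; rewrite /beta.
  - by rewrite coordD amulDl.
  - by rewrite coordD sigmaD amulDr.
  - by rewrite coord_ract coord_lact sigmaM amulA.
rewrite /metric_coord amul_sumr amul_suml.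
transitivity (\sum_(p <- g) beta (lact c p.1) p.2).
  by apply: eq_bigr => p _; rewrite /beta coord_lact amulA.
have := g_central c alg beta beta_balanced; rewrite !big_map => ->.
by apply: eq_bigr => p _; rewrite /beta coord_ract sigmaM amulA.
Qed.

Lemma invertible_metric_coord g :
  invertible n lact ract g -> exists P, metric_coord g ** sigma P = e1.
Proof.
case=> beta [[_ beta_lact _] [_ g_inv]]; exists (beta w w).
have := congr1 coord (g_inv w); rewrite coord_basis (big_morph coord coordD coord0) => <-.
rewrite /metric_coord amul_suml; apply: eq_bigr => p _.
have -> : beta p.2 w = coord p.2 ** beta w w by rewrite -beta_lact coordK.
by rewrite coord_ract sigmaM amulA.
Qed.

Lemma bits_of_sigma u :
  bits_of (sigma u) = blin b_1 (bits_of (sigma ex)) (bits_of (sigma ey)) (bits_of u).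
Proof. by rewrite (bits_of_additive sigmaD) sigma1 bits_of_e1. Qed.

Lemma bits_of_delta u :
  bits_of (delta u) = blin b_0 (bits_of (delta ex)) (bits_of (delta ey)) (bits_of u).
Proof. by rewrite (bits_of_additive deltaD) delta1 bits_of0. Qed.

Lemma fodc_bits_sigma_delta : fodc_bits n (bits_of (sigma ex)) (bits_of (sigma ey))
                                         (bits_of (delta ex)) (bits_of (delta ey)).
Proof.
apply/and3P; split.
- apply/allP => u _; apply/allP => v _; apply/eqP.
  by rewrite -[u]alg_ofK -[v]alg_ofK -!bits_of_sigma -!bits_of_amul -bits_of_sigma sigmaM.
- apply/allP => u _; apply/allP => v _; apply/eqP.
  rewrite -[u]alg_ofK -[v]alg_ofK -!bits_of_delta -!bits_of_sigma -!bits_of_amul.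
  by rewrite -bits_of_delta -bits_ofD deltaM.
- have [a [b gen]] := delta_generates.
  apply/hasP; exists (bits_of a); first exact: mem_all_bits.
  apply/hasP; exists (bits_of b); first exact: mem_all_bits.
  by rewrite -!bits_of_amul -bits_ofD gen bits_of_e1.
Qed.

Lemma central_invertible_metric_bits g :
  central lact ract g -> invertible n lact ract g ->
  exists P, metric_bits n (bits_of (sigma ex)) (bits_of (sigma ey))
                         (bits_of (metric_coord g)) P.
Proof.
move=> g_central /invertible_metric_coord [P G_inv]; exists (bits_of P).
apply/andP; split.
- apply/allP => c _; apply/eqP.
  by rewrite -[c]alg_ofK -!bits_of_sigma -!bits_of_amul central_metric_coord.
- by rewrite -bits_of_sigma -bits_of_amul G_inv bits_of_e1.
Qed.

End LeftParallelisableCalculus.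

Theorem mainTheorem3 :
  (forall n : algname, n = AlgA \/ n = AlgD \/ n = AlgE ->
     forall (M : zmodType) (lact : alg -> M -> M) (ract : M -> alg -> M)
            (d : alg -> M) (w : M),
       ~ is_lp_fodc n lact ract d w) /\
  (forall (n : algname) (M : zmodType) (lact : alg -> M -> M)
          (ract : M -> alg -> M) (d : alg -> M) (w : M),
     is_lp_fodc n lact ract d w ->
     forall g : seq (M * M),
       ~ (central lact ract g /\ invertible n lact ract g)).
Proof.
split=> [n nADE M lact ract d w fodc | n M lact ract d w fodc g [g_central g_inv]].
- exact: negP (no_fodc_bits_ADE _ _ _ _ nADE) (fodc_bits_sigma_delta fodc).
- have [P] := central_invertible_metric_bits fodc g_central g_inv.
  exact: negP (fodc_bits_no_metric _ _ (fodc_bits_sigma_delta fodc)).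
Qed.
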